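(* Let $(P_s)_{s\in\Gamma}$ be a family of bounded linear projections on a Banach space $X$ indexed by a directed poset $\Gamma$ such that: (1) $X=\bigcup_{s\in\Gamma}P_sX$ and each $P_sX$ is separable; (2) $s\leqslant t$ implies $P_s=P_s\circ P_t=P_t\circ P_s$; (3) whenever $s_0<s_1<\dots$ in $\Gamma$, $t=\sup_ns_n$ exists in $\Gamma$ and $P_tX=\overline{\bigcup_nP_{s_n}X}$. Then there exists a closed cofinal set $\Gamma'\subseteq\Gamma$ such that $\sup_{s\in\Gamma'}\|P_s\|<\infty$.
   Context: A subset $\Gamma'$ of a poset $\Gamma$ is cofinal if for every $s\in\Gamma$ there is $t\in\Gamma'$ with $s\leqslant t$; it is closed if $\sup_n s_n\in\Gamma'$ whenever $s_0<s_1<\dots$ is a sequence in $\Gamma'$ (whose supremum exists in $\Gamma$). *)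

From HB Require Import structures.
From mathcomp Require Import all_boot all_order all_algebra.
From mathcomp Require Import all_classical all_reals all_analysis.
Set Implicit Arguments. Unset Strict Implicit. Unset Printing Implicit Defensive.
Import Order.TTheory GRing.Theory Num.Theory.
Import numFieldNormedType.Exports.
Local Open Scope classical_set_scope.
Local Open Scope ring_scope.

Definition separable_set (T : topologicalType) (S : set T) : Prop :=
  exists D : set T, [/\ countable D, D `<=` S & S `<=` closure D].

Definition directed_poset (d : Order.disp_t) (G : porderType d) : Prop :=
  (exists s : G, True) /\ forall s t : G, exists u : G, (s <= u)%O /\ (t <= u)%O.

Definition cofinal (d : Order.disp_t) (G : porderType d) (G' : set G) : Prop :=
  forall s : G, exists2 t : G, G' t & (s <= t)%O.

Definition sigma_closed (d : Order.disp_t) (G : porderType d) (G' : set G) : Prop :=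
  forall (u : nat -> G), (forall n, G' (u n)) -> (forall n, (u n < u n.+1)%O) ->
  forall t : G, supremums (range u) t -> G' t.

From HB Require Import structures.
From mathcomp Require Import all_boot all_order all_algebra.
From mathcomp Require Import all_classical all_reals all_analysis.
Import Order.TTheory GRing.Theory Num.Theory.
Import numFieldNormedType.Exports.
Local Open Scope classical_set_scope.
Local Open Scope ring_scope.

(* Each P_s has a norm bound n_s; some level n = n_s must then be cofinal above
   some s0, for otherwise one builds s_0 < s_1 < ... with ||P_t|| > k for all
   t >= s_k, contradicting the boundedness of P at sup_k s_k.  The set of
   t >= s0 with ||P_t|| <= n is cofinal by directedness, and closed because
   P_t X is the closure of the union of the P_{s_k} X and the P_{s_k} are
   projections of norm <= n with P_{s_k} P_t = P_{s_k}. *)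

Lemma exists_cofinal_level (d : Order.disp_t) (G : porderType d)
    (A : nat -> set G) (s1 : G) :
  (forall n m, (n <= m)%N -> A n `<=` A m) ->
  (forall s, exists n, A n s) ->
  (forall u : nat -> G, (forall k, (u k < u k.+1)%O) ->
     exists t, ubound (range u) t) ->
  exists n s0, forall s, (s0 <= s)%O -> exists2 t, (s <= t)%O & A n t.
Proof.
move=> Amono Acover Aub; apply: contrapT => nolevel.
have escape n s0 : exists s, (s0 <= s)%O /\ forall t, (s <= t)%O -> ~ A n t.
  apply: contrapT => noescape; apply: nolevel; exists n, s0 => s s0s.
  apply: contrapT => noreach; apply: noescape; exists s; split=> // t st Ant.
  by apply: noreach; exists t.
have [f Hf] := choice (fun ns : nat * G => escape ns.1 ns.2).
have [N HN] := choice Acover.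
(* Escaping level max (k+1) (N (u k)), which u k itself reaches, makes u strict. *)
pose u := fix u k := if k is k'.+1 then f (maxn k (N (u k')), u k') else s1.
have u_escape k t : (u k.+1 <= t)%O -> ~ A k.+1 t.
  by move=> ut /(Amono _ _ (leq_maxl _ (N (u k)))); apply: (Hf (_, u k)).2 t ut.
have u_incr k : (u k < u k.+1)%O.
  have [/= uk_le uk_escape] := Hf (maxn k.+1 (N (u k)), u k).
  rewrite lt_neqAle uk_le andbT; apply/negP => /eqP uk.
  apply: (uk_escape (u k)); first by rewrite -[X in (X <= _)%O]/(u k.+1) uk.
  exact: Amono (leq_maxr _ _) _ (HN _).
have [t tub] := Aub u u_incr.
apply: (u_escape (N t) t); first by apply: tub; exists (N t).+1.
exact: Amono (leqnSn _) _ (HN t).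
Qed.

Lemma cofinal_above_level (d : Order.disp_t) (G : porderType d)
    (A : set G) (s0 : G) :
  directed_poset G ->
  (forall s, (s0 <= s)%O -> exists2 t, (s <= t)%O & A t) ->
  cofinal [set t | (s0 <= t)%O /\ A t].
Proof.
move=> [_ dir] level s; have [v [sv s0v]] := dir s s0.
have [t vt At] := level v s0v.
by exists t; [split=> //; exact: le_trans s0v vt | exact: le_trans sv vt].
Qed.

Lemma continuous_linear_nat_bound (R : realType) (X : normedModType R)
    (f : {linear X -> X}) :
  continuous f -> exists n : nat, forall x, `|f x| <= n%:R * `|x|.
Proof.
move=> /(linear_bounded_continuous f).2 /linear_boundedP [M [_ /(_ (M + 1))]].
move=> /(_ ltac:(by rewrite ltrDl)) fM.
exists (Num.truncn (M + 1)).+1 => x; apply: le_trans (fM x) _.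
by rewrite ler_wpM2r // ltW // truncnS_gt.
Qed.

Section ProjectionBound.
Variables (R : realType) (X : normedModType R).

Lemma norm_le_of_projection_approx (T Q : {linear X -> X}) (M : R) x y :
  0 <= M -> Q \o Q = Q -> Q \o T = Q ->
  (forall z, `|Q z| <= M * `|z|) -> range Q y ->
  `|T x| <= M * `|x| + (M + 1) * `|T x - y|.
Proof.
move=> M0 QQ QT Qbound [w _ <-].
have Qy : Q (Q w) = Q w by rewrite -[in RHS]QQ.
have QTx : Q (T x) = Q x by rewrite -[in RHS]QT.
have split_Tx : T x = Q (T x) + ((T x - Q w) - Q (T x - Q w)).
  by rewrite linearB Qy opprB subrKA addrC subrK.
rewrite {1}split_Tx; apply: le_trans (ler_normD _ _) _.
apply: lerD; first by rewrite QTx.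
apply: le_trans (ler_normB _ _) _.
by rewrite mulrDl mul1r addrC lerD2r.
Qed.

Lemma norm_le_of_closure_ranges (T : {linear X -> X})
    (Q : nat -> {linear X -> X}) (M : R) :
  0 <= M -> (forall k, Q k \o Q k = Q k) -> (forall k, Q k \o T = Q k) ->
  (forall k z, `|Q k z| <= M * `|z|) ->
  range T `<=` closure (\bigcup_k range (Q k)) ->
  forall x, `|T x| <= M * `|x|.
Proof.
move=> M0 QQ QT Qbound Tclosure x; apply/ler_addgt0Pr => e e0.
have M1 : 0 < M + 1 by rewrite ltr_wpDl.
have r0 : 0 < e / (M + 1) by rewrite divr_gt0.
have /(_ _ (nbhsx_ballx _ _ r0)) [y [[k _ Qky] Txy]] :=
  Tclosure (T x) (ex_intro2 _ _ x I erefl).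
rewrite -ball_normE /= in Txy.
apply: le_trans (norm_le_of_projection_approx _ _ _ x _ M0 (QQ k) (QT k) (Qbound k) Qky) _.
rewrite lerD2l -(divfK (negbT (gt_eqF M1)) e) mulrC.
by rewrite ler_wpM2r ?ltW.
Qed.

End ProjectionBound.

Theorem proposition4p1 (R : realType) (X : completeNormedModType R)
  (d : Order.disp_t) (G : porderType d) (P : G -> {linear X -> X}) :
  directed_poset G ->
  (forall s, continuous (P s)) ->
  (forall s, P s \o P s = P s) ->
  \bigcup_(s in [set: G]) range (P s) = [set: X] ->
  (forall s, separable_set (range (P s))) ->
  (forall s t, (s <= t)%O -> P s \o P t = P s /\ P t \o P s = P s) ->
  (forall u : nat -> G, (forall n, (u n < u n.+1)%O) ->
     exists t : G, supremums (range u) t /\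
       range (P t) = closure (\bigcup_n range (P (u n)))) ->
  exists G' : set G, [/\ cofinal G', sigma_closed G' &
    exists M : R, forall s, G' s -> forall x : X, `|P s x| <= M * `|x| ].
Proof.
move=> Gdir Pcont Pidem _ _ Pcomp Psup.
pose bounded_by (n : nat) := [set s | forall x, `|P s x| <= n%:R * `|x|].
have [n [s0 level]] : exists n s0, forall s, (s0 <= s)%O ->
    exists2 t, (s <= t)%O & bounded_by n t.
  have [[s1 _] _] := Gdir.
  apply: (@exists_cofinal_level _ _ bounded_by s1).
  - move=> k m km s sk x; apply: le_trans (sk x) _.
    by rewrite ler_wpM2r // ler_nat.
  - by move=> s; apply: continuous_linear_nat_bound.
  - by move=> u /Psup [t [[tub _] _]]; exists t.
exists [set t | (s0 <= t)%O /\ bounded_by n t]; split.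
- exact: cofinal_above_level.
- move=> u uG uincr t tsup.
  have [t' [t'sup Pt'range]] := Psup u uincr.
  have Ptrange := Pt'range; rewrite -(is_subset1_supremums tsup t'sup) in Ptrange.
  have ut k : (u k <= t)%O by apply: tsup.1; exists k.
  split; first exact: le_trans (uG 0%N).1 (ut 0%N).
  apply: (@norm_le_of_closure_ranges _ _ _ (P \o u)) => [|k|k|k|].
  + exact: ler0n.
  + exact: Pidem.
  + exact: (Pcomp _ _ (ut k)).1.
  + exact: (uG k).2.
  + by rewrite Ptrange.
- by exists n%:R => s [_].
Qed.
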